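(* Let $q \geq 1$ and $n \geq 5$ be integers. Let $G_{n} := (\mathbb{Z}/2\mathbb{Z})^{qn} \times (\mathbb{Z}/4\mathbb{Z})^{qn}$ and $H_{n} := (\mathbb{Z}/2\mathbb{Z})^{q(n-2)} \times (\mathbb{Z}/4\mathbb{Z})^{q(n+1)}$. Then Duplicator has a winning strategy in the $q$-ary count-free pebble game on $(G_n, H_n)$ with $qn/4$ pebble pairs.
   Context: The $q$-ary count-free $m$-pebble game on finite groups $G, H$ is played by Spoiler and Duplicator with $m$ pebble pairs $(p_i, p_i')$. If $|G| \neq |H|$, Spoiler wins immediately. Each round proceeds as follows: (1) Spoiler picks up $d$ pebble pairs, where $1 \le d \le q$; (2) the winning condition is checked; (3) Spoiler places the $d$ chosen pebbles from one side on $d$ elements of one of the groups (of his choice), and then Duplicator places the corresponding partner pebbles on $d$ elements of the other group. Winning condition: if $g_1, \ldots, g_m$ are the pebbled elements of $G$ and $h_1, \ldots, h_m$ the corresponding pebbled elements of $H$, Spoiler wins if the map $g_i \mapsto h_i$ does not extend to an isomorphism $\langle g_1, \ldots, g_m\rangle \to \langle h_1, \ldots, h_m\rangle$; otherwise play continues. Duplicator has a winning strategy if she can prevent Spoiler from ever winning, for any number of rounds. *)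

From mathcomp Require Import all_boot all_fingroup all_algebra.
Set Implicit Arguments. Unset Strict Implicit. Unset Printing Implicit Defensive.
Local Open Scope group_scope.

(* Concrete groups: (Z/2)^a x (Z/4)^b, with the additive group structure
   of row vectors over 'Z_2 and 'Z_4 (seen as finGroupTypes). *)
Definition Z2Z4 (a b : nat) : finGroupType := ('rV['Z_2]_a * 'rV['Z_4]_b)%type.

Definition Gn (q n : nat) : finGroupType := Z2Z4 (q * n) (q * n).
Definition Hn (q n : nat) : finGroupType := Z2Z4 (q * (n - 2)) (q * (n + 1)).

Section Game.
Variables (gT hT : finGroupType) (m q : nat).

(* A configuration: pebble pair i is either off the board (None) or
   placed on (g_i, h_i). *)
Definition config := 'I_m -> option (gT * hT).

Definition pebbled (c : config) : seq (gT * hT) := pmap c (enum 'I_m).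

Definition extends_to_iso (c : config) : Prop :=
  let gs := [set p.1 | p in pebbled c] in
  let hs := [set p.2 | p in pebbled c] in
  exists f : {morphism <<gs>> >-> hT},
    isom <<gs>> <<hs>> f /\ forall p, p \in pebbled c -> f p.1 = p.2.

Definition pick_up (D : {set 'I_m}) (c : config) : config :=
  fun i => if i \in D then None else c i.

Definition place (D : {set 'I_m}) (a : 'I_m -> gT) (b : 'I_m -> hT)
  (c : config) : config :=
  fun i => if i \in D then Some (a i, b i) else c i.

CoInductive dup_survives (c : config) : Prop :=
  DupSurvives :
    (forall D : {set 'I_m}, 1 <= #|D| <= q ->
       extends_to_iso (pick_up D c)
       /\ (forall a : 'I_m -> gT, exists b : 'I_m -> hT,
              dup_survives (place D a b c))
       /\ (forall b : 'I_m -> hT, exists a : 'I_m -> gT,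
              dup_survives (place D a b c))) ->
    dup_survives c.

Definition dup_wins_game : Prop :=
  #|[set: gT]| = #|[set: hT]| /\ dup_survives (fun _ => None).

End Game.

(* Let E_k be the subgroup of (Z/2)^a x (Z/4)^b of the vectors supported on the
   first k coordinates of each kind.  For k <= q(n-2), in particular for
   k = m := qn/4, E_k is the same group (Z/2)^k x (Z/4)^k inside G and H.
   Duplicator maintains that, up to an automorphism of G and one of H, every
   pebbled pair has the form (x, x) with x in E_m; the identity of E_m then
   restricts to the required isomorphism.
   Everything rests on a normal form: r elements of E_K can be moved into E_(j+r)
   by an automorphism fixing E_j pointwise and stabilising E_K.  One element at a
   time: the part t of x outside E_j is the image of the j-th basis vector of
   (Z/4)^b (if t has an odd Z/4-coordinate), of the j-th basis vector of (Z/2)^a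
   (if 2t = 0 and t has a nonzero Z/2-coordinate), or else of twice the former,
   under a coordinate swap composed with a transvection y |-> y + phi(y) z.
   When Spoiler lifts d pebbles, such an automorphism of G stabilising E_m,
   copied to H, compresses the remaining elements into E_(m-d); a second one,
   fixing E_(m-d), moves Spoiler's new elements into E_m, and Duplicator answers
   with the same vectors in H. *)

From HB Require Import structures.
From mathcomp Require Import all_boot all_fingroup all_algebra.
From mathcomp Require Import zify.
Set Implicit Arguments. Unset Strict Implicit. Unset Printing Implicit Defensive.

Import GRing.Theory.
Local Open Scope ring_scope.

Definition zvec a b := ('rV['Z_2]_a * 'rV['Z_4]_b)%type.

Section AdditiveMaps.
Variables (U V : zmodType) (f : U -> V).
Hypothesis fD : {morph f : x y / x + y}.

Lemma morphD0 : f 0 = 0.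
Proof. by apply: (addrI (f 0)); rewrite -fD !addr0. Qed.

Lemma morphDB : {morph f : x y / x - y}.
Proof. by move=> x y; apply: (addIr (f y)); rewrite -fD !subrK. Qed.

Lemma morphDMn n : {morph f : x / x *+ n}.
Proof. by move=> x; elim: n => [|n IHn]; rewrite ?morphD0 // !mulrS fD IHn. Qed.

Lemma morphD_inj : (forall x, f x = 0 -> x = 0) -> injective f.
Proof. by move=> kf x y fxy; apply/subr0_eq/kf; rewrite morphDB fxy subrr. Qed.

End AdditiveMaps.

Lemma mulrn_modn (V : zmodType) (z : V) N n : z *+ N = 0 -> z *+ (n %% N) = z *+ n.
Proof. by move=> zN; rewrite {2}(divn_eq n N) mulrnDr mulnC mulrnA zN mul0rn add0r. Qed.

Lemma Z2_addxx (u : 'Z_2) : u + u = 0.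
Proof. by apply/eqP; case: u => [[|[|?]] ?]. Qed.

Lemma Z2_unit (u : 'Z_2) : u != 0 -> u \is a GRing.unit.
Proof. by case: u => [[|[|?]] ?]. Qed.

Lemma Z4_odd_unit (u : 'Z_4) : odd u -> u \is a GRing.unit.
Proof. by case: u => [[|[|[|[|?]]]] ?]. Qed.

Lemma Z4_even_addxx (u : 'Z_4) : ~~ odd u -> u + u = 0.
Proof. by case: u => [[|[|[|[|?]]]] ?] // _; apply/eqP. Qed.

Lemma Z4_even_half (u : 'Z_4) : ~~ odd u -> (u == 2)%:R + (u == 2)%:R = u.
Proof. by case: u => [[|[|[|[|?]]]] ?] // _; apply/eqP. Qed.

Section Coordinates.
Variables a b : nat.
Implicit Types x y : zvec a b.

(* Coordinates are indexed by [nat], with junk value 0 beyond the dimension,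
   so that vectors of different dimensions can be compared coordinatewise. *)
Definition coord2 (i : nat) x : 'Z_2 := if insub i is Some i' then x.1 0 i' else 0.
Definition coord4 (i : nat) x : 'Z_4 := if insub i is Some i' then x.2 0 i' else 0.

Definition zvec_of (f2 : nat -> 'Z_2) (f4 : nat -> 'Z_4) : zvec a b :=
  (\row_(i < a) f2 i, \row_(i < b) f4 i).

Lemma coord2E x (i : 'I_a) : coord2 i x = x.1 0 i.
Proof. by rewrite /coord2 valK. Qed.

Lemma coord4E x (i : 'I_b) : coord4 i x = x.2 0 i.
Proof. by rewrite /coord4 valK. Qed.

Lemma coord2_out x i : (a <= i)%N -> coord2 i x = 0.
Proof. by move=> le_ai; rewrite /coord2 insubF // ltnNge le_ai. Qed.

Lemma coord4_out x i : (b <= i)%N -> coord4 i x = 0.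
Proof. by move=> le_bi; rewrite /coord4 insubF // ltnNge le_bi. Qed.

Lemma coord2_zvec_of f2 f4 i : coord2 i (zvec_of f2 f4) = if (i < a)%N then f2 i else 0.
Proof.
case: ltnP => [lt_ia|le_ai]; last by rewrite coord2_out.
by rewrite -[i]/(val (Ordinal lt_ia)) coord2E mxE.
Qed.

Lemma coord4_zvec_of f2 f4 i : coord4 i (zvec_of f2 f4) = if (i < b)%N then f4 i else 0.
Proof.
case: ltnP => [lt_ib|le_bi]; last by rewrite coord4_out.
by rewrite -[i]/(val (Ordinal lt_ib)) coord4E mxE.
Qed.

Lemma zvecP x y : (forall i, (i < a)%N -> coord2 i x = coord2 i y) ->
  (forall i, (i < b)%N -> coord4 i x = coord4 i y) -> x = y.
Proof.
case: x y => [x2 x4] [y2 y4] eq2 eq4; congr pair; apply/rowP => i.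
  by have := eq2 i (ltn_ord i); rewrite !coord2E.
by have := eq4 i (ltn_ord i); rewrite !coord4E.
Qed.

Lemma coord2B i : {morph coord2 i : x y / x - y}.
Proof.
move=> x y; case: (ltnP i a) => [lt_ia|le_ai]; last by rewrite !coord2_out ?subr0.
by rewrite -[i]/(val (Ordinal lt_ia)) !coord2E /= !mxE.
Qed.

Lemma coord4B i : {morph coord4 i : x y / x - y}.
Proof.
move=> x y; case: (ltnP i b) => [lt_ib|le_bi]; last by rewrite !coord4_out ?subr0.
by rewrite -[i]/(val (Ordinal lt_ib)) !coord4E /= !mxE.
Qed.

HB.instance Definition _ i :=
  GRing.isZmodMorphism.Build (zvec a b) 'Z_2 (coord2 i) (coord2B i).
HB.instance Definition _ i :=
  GRing.isZmodMorphism.Build (zvec a b) 'Z_4 (coord4 i) (coord4B i).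

Lemma zvec_mul4 x : x *+ 4 = 0.
Proof.
have Z2_mul4 (u : 'Z_2) : u *+ 4 = 0 by apply/eqP; case: u => [[|[|?]] ?].
have Z4_mul4 (u : 'Z_4) : u *+ 4 = 0 by apply/eqP; case: u => [[|[|[|[|?]]]] ?].
by apply: zvecP => i _; rewrite raddfMn raddf0 ?Z2_mul4 ?Z4_mul4.
Qed.

End Coordinates.

Arguments zvec_of {a b}.

Section Supports.
Variables a b : nat.
Implicit Types x y : zvec a b.

Definition supported k x : Prop :=
  forall i, (k <= i)%N -> coord2 i x = 0 /\ coord4 i x = 0.

Definition vanishes_below j x : Prop :=
  forall i, (i < j)%N -> coord2 i x = 0 /\ coord4 i x = 0.

Lemma supported0 k : supported k (0 : zvec a b).
Proof. by move=> i _; rewrite !raddf0. Qed.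

Lemma supportedD k x y : supported k x -> supported k y -> supported k (x + y).
Proof.
move=> sx sy i le_ki; rewrite !raddfD /=.
by have [-> ->] := sx i le_ki; have [-> ->] := sy i le_ki; rewrite !addr0.
Qed.

Lemma supportedB k x y : supported k x -> supported k y -> supported k (x - y).
Proof.
move=> sx sy i le_ki; rewrite !raddfB /=.
by have [-> ->] := sx i le_ki; have [-> ->] := sy i le_ki; rewrite !subr0.
Qed.

Lemma supportedMn k x n : supported k x -> supported k (x *+ n).
Proof.
by move=> sx i le_ki; rewrite !raddfMn /=; have [-> ->] := sx i le_ki; rewrite !mul0rn.
Qed.

Lemma supported_leq k k' x : (k <= k')%N -> supported k x -> supported k' x.
Proof. by move=> le_kk' sx i le_k'i; apply: sx; apply: leq_trans le_k'i. Qed.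

Lemma supported_max x : supported (maxn a b) x.
Proof. by move=> i; rewrite geq_max => /andP[le_ai le_bi]; rewrite coord2_out ?coord4_out. Qed.

Definition supp_set k : {set zvec a b} :=
  [set x | [forall i : 'I_(maxn a b), (k <= i)%N ==> (coord2 i x == 0) && (coord4 i x == 0)]].

Lemma supp_setP k x : reflect (supported k x) (x \in supp_set k).
Proof.
rewrite inE; apply: (iffP forallP) => [sx i le_ki | sx i].
  case: (ltnP i (maxn a b)) => [lt_i_ab | le_ab_i]; last exact: supported_max.
  by have /implyP/(_ le_ki)/andP[/eqP-> /eqP->] := sx (Ordinal lt_i_ab).
by apply/implyP => /sx[-> ->]; rewrite !eqxx.
Qed.

Definition basis2 j : zvec a b := zvec_of (fun i => (i == j)%:R) (fun=> 0).
Definition basis4 j : zvec a b := zvec_of (fun=> 0) (fun i => (i == j)%:R).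

Lemma supported_basis2 j k : (j < k)%N -> supported k (basis2 j).
Proof.
move=> lt_jk i le_ki; rewrite coord2_zvec_of coord4_zvec_of !if_same.
by rewrite (_ : i == j = false) ?if_same //; apply/eqP; lia.
Qed.

Lemma supported_basis4 j k : (j < k)%N -> supported k (basis4 j).
Proof.
move=> lt_jk i le_ki; rewrite coord2_zvec_of coord4_zvec_of !if_same.
by rewrite (_ : i == j = false) ?if_same //; apply/eqP; lia.
Qed.

End Supports.

Arguments supp_set {a b} k.
Arguments basis2 {a b} j.
Arguments basis4 {a b} j.
Arguments supported_basis2 {a b j k}.
Arguments supported_basis4 {a b j k}.

Section Truncation.
Variables a1 b1 a2 b2 : nat.
Implicit Types x y : zvec a1 b1.

Definition trunc k x : zvec a2 b2 :=
  zvec_of (fun i => if (i < k)%N then coord2 i x else 0)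
          (fun i => if (i < k)%N then coord4 i x else 0).

Lemma coord2_trunc k x i :
  coord2 i (trunc k x) = if (i < a2)%N && (i < k)%N then coord2 i x else 0.
Proof. by rewrite coord2_zvec_of; case: (i < a2)%N. Qed.

Lemma coord4_trunc k x i :
  coord4 i (trunc k x) = if (i < b2)%N && (i < k)%N then coord4 i x else 0.
Proof. by rewrite coord4_zvec_of; case: (i < b2)%N. Qed.

Lemma truncB k : {morph trunc k : x y / x - y}.
Proof.
move=> x y; apply: zvecP => i _;
  by rewrite [RHS]raddfB /= !(coord2_trunc, coord4_trunc); case: ifP; rewrite ?raddfB ?subr0.
Qed.

HB.instance Definition _ k :=
  GRing.isZmodMorphism.Build (zvec a1 b1) (zvec a2 b2) (trunc k) (truncB k).

Lemma supported_trunc k x : supported k (trunc k x).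
Proof.
by move=> i le_ki; rewrite coord2_trunc coord4_trunc (leq_gtF le_ki) !andbF.
Qed.

Lemma supported_trunc_of k j x : supported k x -> supported k (trunc j x).
Proof.
by move=> sx i le_ki; rewrite coord2_trunc coord4_trunc (sx i le_ki).1 (sx i le_ki).2 !if_same.
Qed.

End Truncation.

Arguments trunc {a1 b1 a2 b2} k x.

Lemma truncK a1 b1 a2 b2 k (x : zvec a1 b1) : (k <= a2)%N -> (k <= b2)%N ->
  supported k x -> trunc k (trunc k x : zvec a2 b2) = x.
Proof.
move=> le_ka2 le_kb2 sx; apply: zvecP => i _; rewrite !(coord2_trunc, coord4_trunc).
- case: (ltnP i k) => [lt_ik | le_ki]; rewrite ?andbT ?andbF; last by rewrite (sx i le_ki).1.
  by rewrite (leq_trans lt_ik le_ka2); case: ltnP => // /coord2_out->.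
- case: (ltnP i k) => [lt_ik | le_ki]; rewrite ?andbT ?andbF; last by rewrite (sx i le_ki).2.
  by rewrite (leq_trans lt_ik le_kb2); case: ltnP => // /coord4_out->.
Qed.

Lemma vanishes_below_sub_trunc a b j (x : zvec a b) : vanishes_below j (x - trunc j x).
Proof.
move=> i lt_ij; rewrite !raddfB /= coord2_trunc coord4_trunc lt_ij !andbT.
split; first by case: ltnP => [_|/coord2_out->]; rewrite subrr.
by case: ltnP => [_|/coord4_out->]; rewrite subrr.
Qed.

Section StableAutomorphisms.
Variables a b : nat.
Implicit Types (x y z : zvec a b) (f g : zvec a b -> zvec a b).

Definition stab_aut K j f :=
  [/\ {morph f : x y / x + y}, injective f,
      forall y, supported j y -> f y = y
    & forall y, supported K y -> supported K (f y)].

Lemma stab_aut_id K j : stab_aut K j id.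
Proof. by split. Qed.

Lemma stab_aut_comp K j f g : stab_aut K j f -> stab_aut K j g -> stab_aut K j (f \o g).
Proof.
case=> fD f_inj f_fix f_stab [gD g_inj g_fix g_stab]; split.
- by move=> x y /=; rewrite gD fD.
- exact: inj_comp.
- by move=> y sy /=; rewrite g_fix ?f_fix.
- by move=> y sy; apply/f_stab/g_stab.
Qed.

Lemma stab_autW K j j' f : (j' <= j)%N -> stab_aut K j f -> stab_aut K j' f.
Proof.
by move=> le_j'j [fD f_inj f_fix f_stab]; split=> // y /(supported_leq le_j'j)/f_fix.
Qed.

(* The inverse stabilises [supp_set K] because [f] maps this finite set
   injectively into itself, hence onto itself. *)
Lemma stab_aut_inv K j f : stab_aut K j f ->
  exists g, [/\ stab_aut K j g, cancel f g & cancel g f].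
Proof.
case=> fD f_inj f_fix f_stab; have [g fK gK] := injF_bij f_inj.
exists g; split=> //; split.
- by move=> x y; apply: f_inj; rewrite fD !gK.
- exact: can_inj gK.
- by move=> y sy; rewrite -{1}(f_fix y sy) fK.
move=> y /supp_setP Ky.
have f_stab_set : f @: supp_set K \subset supp_set K.
  by apply/subsetP=> _ /imsetP[x /supp_setP Kx ->]; apply/supp_setP/f_stab.
have := subset_cardP (card_imset _ f_inj) f_stab_set.
by move=> /(_ y); rewrite Ky => /imsetP[x /supp_setP Kx ->]; rewrite fK.
Qed.

Section Transvection.
Variables (p K j : nat) (phi : {additive zvec a b -> 'Z_p}) (z : zvec a b).
Hypotheses (p_gt1 : (1 < p)%N) (zp : z *+ p = 0) (Kz : supported K z).
Hypotheses (phi_fix : forall y, supported j y -> phi y = 0).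
Hypothesis (phi_unit : 1 + phi z \is a GRing.unit).

Definition transvection y := y + z *+ phi y.

Lemma transvection_stab_aut : stab_aut K j transvection.
Proof.
have zN : z *+ (Zp_trunc p).+2 = 0 by rewrite Zp_cast.
have tD : {morph transvection : x y / x + y}.
  move=> x y; rewrite /transvection raddfD addrACA -mulrnDr.
  by rewrite -[in RHS](mulrn_modn _ zN).
have phiT y : phi (transvection y) = (1 + phi z) * phi y.
  by rewrite raddfD raddfMn /= -mulr_natr natr_Zp mulrDl mul1r.
split=> //.
- apply: morphD_inj => // y ty0.
  have phiy0 : phi y = 0 by apply: (mulrI phi_unit); rewrite -phiT ty0 !raddf0 mulr0.
  by move: ty0; rewrite /transvection phiy0 mulr0n addr0.
- by move=> y /phi_fix phiy0; rewrite /transvection phiy0 mulr0n addr0.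
- by move=> y Ky; apply/supportedD/supportedMn.
Qed.

End Transvection.

(* The transvection by [z := s w - u] maps [u] to [s w]. *)
Lemma stab_aut_onto K j p (phi : {additive zvec a b -> 'Z_p}) s u w :
  (1 < p)%N -> stab_aut K j s -> involutive s ->
  supported K u -> supported K w -> u *+ p = 0 -> w *+ p = 0 ->
  (forall y, supported j y -> phi y = 0) -> phi u = 1 ->
  phi (s w) \is a GRing.unit ->
  exists2 th, stab_aut K j th & th u = w.
Proof.
move=> p_gt1 s_aut sK Ku Kw up wp phi_fix phiu unit_sw.
have [sD _ _ s_stab] := s_aut.
have zp : (s w - u) *+ p = 0 by rewrite mulrnBl -morphDMn // wp morphD0 // up subrr.
have unit_z : 1 + phi (s w - u) \is a GRing.unit by rewrite raddfB phiu addrC subrK.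
exists (s \o transvection phi (s w - u)).
  apply: stab_aut_comp => //.
  by apply: transvection_stab_aut => //; apply/supportedB/Ku/s_stab.
have val1 : (1 : 'Z_p) = 1%N :> nat by rewrite /= Zp_cast // modn_small.
by rewrite /= /transvection phiu val1 mulr1n addrC subrK sK.
Qed.

End StableAutomorphisms.

Definition swapn (i i' l : nat) := if l == i then i' else if l == i' then i else l.

Lemma swapnK i i' : involutive (swapn i i').
Proof. by move=> l; rewrite /swapn; do ! case: eqP => //=; lia. Qed.

Lemma swapn_lt i i' n : (i < n)%N -> (i' < n)%N ->
  forall l, (l < n)%N -> (swapn i i' l < n)%N.
Proof. by move=> lt_in lt_i'n l; rewrite /swapn; do ! case: eqP. Qed.

Lemma swapn_fix i i' l : l != i -> l != i' -> swapn i i' l = l.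
Proof. by rewrite /swapn => /negbTE-> /negbTE->. Qed.

Section Permutations.
Variables a b : nat.
Implicit Types y : zvec a b.

Definition permute (s2 s4 : nat -> nat) y : zvec a b :=
  zvec_of (fun l => coord2 (s2 l) y) (fun l => coord4 (s4 l) y).

Variables (K j : nat) (s2 s4 : nat -> nat).
Hypotheses (s2K : involutive s2) (s4K : involutive s4).
Hypotheses (s2_lt : forall l, (l < a)%N -> (s2 l < a)%N).
Hypotheses (s4_lt : forall l, (l < b)%N -> (s4 l < b)%N).
Hypotheses (s2_fix : forall l, (l < j)%N || (K <= l)%N -> s2 l = l).
Hypotheses (s4_fix : forall l, (l < j)%N || (K <= l)%N -> s4 l = l).

Lemma permuteK : involutive (permute s2 s4).
Proof.
move=> y; apply: zvecP => l lt_l; rewrite !(coord2_zvec_of, coord4_zvec_of) lt_l.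
  by rewrite s2_lt // s2K.
by rewrite s4_lt // s4K.
Qed.

Lemma permute_stab_aut : stab_aut K j (permute s2 s4).
Proof.
have s_ge (s : nat -> nat) : involutive s -> (forall l, (l < j)%N || (K <= l)%N -> s l = l) ->
    forall l, (j <= l)%N -> (j <= s l)%N.
  move=> sK s_fix l le_jl; rewrite leqNgt; apply/negP => lt_slj.
  by move: le_jl; rewrite -(sK l) s_fix ?lt_slj // leqNgt lt_slj.
split.
- move=> y y'; apply: zvecP => l _; rewrite [RHS]raddfD /= !(coord2_zvec_of, coord4_zvec_of);
    by case: ifP; rewrite ?raddfD ?addr0.
- exact: inv_inj permuteK.
- move=> y sy; apply: zvecP => l lt_l; rewrite !(coord2_zvec_of, coord4_zvec_of) lt_l.
    case: (ltnP l j) => [lt_lj | le_jl]; first by rewrite s2_fix ?lt_lj.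
    by rewrite (sy _ le_jl).1 (sy _ (s_ge _ s2K s2_fix _ le_jl)).1.
  case: (ltnP l j) => [lt_lj | le_jl]; first by rewrite s4_fix ?lt_lj.
  by rewrite (sy _ le_jl).2 (sy _ (s_ge _ s4K s4_fix _ le_jl)).2.
- move=> y sy l le_Kl; rewrite !(coord2_zvec_of, coord4_zvec_of).
  by rewrite s2_fix ?s4_fix ?le_Kl ?orbT // (sy l le_Kl).1 (sy l le_Kl).2 !if_same.
Qed.

End Permutations.

Arguments permute {a b}.
Arguments permuteK {a b}.
Arguments permute_stab_aut {a b}.

Section Halving.
Variables a b : nat.
Implicit Types t : zvec a b.

Definition halve t : zvec a b := zvec_of (fun=> 0) (fun l => (coord4 l t == 2)%:R).

Lemma coord4_halve t l : coord4 l (halve t) = (coord4 l t == 2)%:R.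
Proof. by rewrite coord4_zvec_of; case: ltnP => // /coord4_out->. Qed.

Lemma halveK t : (forall i, coord2 i t = 0) -> (forall l, ~~ odd (coord4 l t)) ->
  halve t + halve t = t.
Proof.
move=> t2 t4; apply: zvecP => l _; rewrite raddfD /=.
  by rewrite coord2_zvec_of t2 if_same addr0.
by rewrite coord4_halve (Z4_even_half (t4 l)).
Qed.

Lemma supported_halve k t : supported k t -> supported k (halve t).
Proof.
by move=> st l le_kl; rewrite coord4_halve (st l le_kl).2 coord2_zvec_of if_same.
Qed.

End Halving.

Section Reachability.
Variables a b K j : nat.
Hypotheses (lt_ja : (j < a)%N) (lt_jb : (j < b)%N).
Implicit Types x y t w : zvec a b.

Definition reachable x :=
  exists th u, [/\ stab_aut K j th, supported j.+1 u & th u = x].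

Lemma reachable_low x : supported j.+1 x -> reachable x.
Proof. by move=> sx; exists id, x; split=> //; apply: stab_aut_id. Qed.

Lemma reachable_shift y t : supported j y -> reachable t -> reachable (y + t).
Proof.
move=> sy [th [u [[thD th_inj th_fix th_stab] su thu]]].
exists th, (y + u); split; first by [].
  by apply: supportedD => //; apply: supported_leq sy.
by rewrite thD th_fix // thu.
Qed.

Lemma reachable_double t : reachable t -> reachable (t + t).
Proof.
move=> [th [u [th_aut su thu]]]; exists th, (u + u); split=> //.
  exact: supportedD.
by have [thD _ _ _] := th_aut; rewrite thD thu.
Qed.

Lemma reachable_odd w l : supported K w -> (j <= l < K)%N -> odd (coord4 l w) ->
  reachable w.
Proof.
move=> Kw /andP[le_jl lt_lK] odd_w.
have lt_lb : (l < b)%N by rewrite ltnNge; apply: contraL odd_w => /coord4_out->.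
have lt_jK : (j < K)%N by apply: leq_ltn_trans lt_lK.
have s_fix l' : (l' < j)%N || (K <= l')%N -> swapn j l l' = l'.
  by move=> out_l'; apply: swapn_fix; apply/eqP; lia.
pose s : zvec a b -> zvec a b := permute id (swapn j l).
have s_aut : stab_aut K j s.
  exact: permute_stab_aut (swapnK _ _) _ (swapn_lt lt_jb lt_lb) _ s_fix.
have sK : involutive s by apply: permuteK (swapnK _ _) _ (swapn_lt lt_jb lt_lb).
have phi_basis4 : coord4 j (basis4 j : zvec a b) = 1 by rewrite coord4_zvec_of lt_jb eqxx.
have unit_sw : coord4 j (s w) \is a GRing.unit.
  by rewrite coord4_zvec_of lt_jb /swapn eqxx Z4_odd_unit.
have [th th_aut thw] := stab_aut_onto (p := 4) isT s_aut sK (supported_basis4 lt_jK) Kw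
  (zvec_mul4 _) (zvec_mul4 _) (fun y sy => (sy j (leqnn j)).2) phi_basis4 unit_sw.
by exists th, (basis4 j); split=> //; apply: supported_basis4.
Qed.

Lemma reachable_order2 w i : supported K w -> w + w = 0 -> (j <= i < K)%N ->
  coord2 i w != 0 -> reachable w.
Proof.
move=> Kw ww /andP[le_ji lt_iK] nz_w.
have lt_ia : (i < a)%N by rewrite ltnNge; apply: contra nz_w => /coord2_out->.
have lt_jK : (j < K)%N by apply: leq_ltn_trans lt_iK.
have s_fix l' : (l' < j)%N || (K <= l')%N -> swapn j i l' = l'.
  by move=> out_l'; apply: swapn_fix; apply/eqP; lia.
pose s : zvec a b -> zvec a b := permute (swapn j i) id.
have s_aut : stab_aut K j s.
  exact: permute_stab_aut (swapnK _ _) _ (swapn_lt lt_ja lt_ia) _ s_fix _.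
have sK : involutive s by apply: permuteK (swapnK _ _) _ (swapn_lt lt_ja lt_ia) _.
have basis2_mul2 : basis2 j *+ 2 = 0 :> zvec a b.
  apply: zvecP => l _; rewrite raddfMn raddf0 /=; first by rewrite mulr2n Z2_addxx.
  by rewrite coord4_zvec_of if_same mul0rn.
have phi_basis2 : coord2 j (basis2 j : zvec a b) = 1 by rewrite coord2_zvec_of lt_ja eqxx.
have unit_sw : coord2 j (s w) \is a GRing.unit.
  by rewrite coord2_zvec_of lt_ja /swapn eqxx Z2_unit.
have w2 : w *+ 2 = 0 by rewrite mulr2n.
have [th th_aut thw] := stab_aut_onto (p := 2) isT s_aut sK (supported_basis2 lt_jK) Kw
  basis2_mul2 w2 (fun y sy => (sy j (leqnn j)).1) phi_basis2 unit_sw.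
by exists th, (basis2 j); split=> //; apply: supported_basis2.
Qed.

Lemma reachable_tail t : supported K t -> vanishes_below j t -> reachable t.
Proof.
move=> Kt t_low.
have t_out l : ~~ (j <= l < K)%N -> coord2 l t = 0 /\ coord4 l t = 0.
  by rewrite negb_and -ltnNge -leqNgt => /orP[/t_low | /Kt].
have [/hasP[l] | /hasPn even_t] := boolP (has (fun l => odd (coord4 l t)) (index_iota j K)).
  by rewrite mem_index_iota; apply: reachable_odd.
have t_even l : ~~ odd (coord4 l t).
  case: (boolP (j <= l < K)%N) => [jlK | /t_out[_ ->]] //.
  by apply/even_t; rewrite mem_index_iota.
have tt : t + t = 0.
  by apply: zvecP => l _; rewrite raddfD raddf0 /= ?Z2_addxx ?(Z4_even_addxx (t_even l)).
have [/hasP[i] | /hasPn zero2] := boolP (has (fun i => coord2 i t != 0) (index_iota j K)).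
  by rewrite mem_index_iota; apply: reachable_order2.
have t2 i : coord2 i t = 0.
  case: (boolP (j <= i < K)%N) => [jiK | /t_out[-> _]] //.
  by apply/eqP; rewrite -[_ == _]negbK; apply/zero2; rewrite mem_index_iota.
rewrite -(halveK t2 t_even); apply: reachable_double.
have Kh := supported_halve Kt.
have [/hasP[l] | /hasPn even_h] :=
  boolP (has (fun l => odd (coord4 l (halve t))) (index_iota j K)).
  by rewrite mem_index_iota; apply: reachable_odd.
apply/reachable_low/(supported_leq (leqnSn j)) => l le_jl.
rewrite coord2_zvec_of if_same; split=> //.
case: (ltnP l K) => [lt_lK | /(supported_halve Kt)[_ //]].
have := even_h l; rewrite mem_index_iota le_jl lt_lK coord4_halve => /(_ isT).
by case: eqP.
Qed.

Lemma reachable_all x : supported K x -> reachable x.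
Proof.
move=> Kx; rewrite -(subrK (trunc j x) x) addrC.
apply: reachable_shift; first exact: supported_trunc.
apply: reachable_tail; last exact: vanishes_below_sub_trunc.
by apply: supportedB => //; apply: supported_trunc_of.
Qed.

Lemma stab_aut_lower x : supported K x ->
  exists2 g, stab_aut K j g & supported j.+1 (g x).
Proof.
move=> /reachable_all[th [u [th_aut su thu]]].
have [g [g_aut thK gK]] := stab_aut_inv th_aut.
by exists g; rewrite // -thu thK.
Qed.

End Reachability.

Lemma compress_seq a b K j (ys : seq (zvec a b)) : {in ys, forall y, supported K y} ->
  (j + size ys <= a)%N -> (j + size ys <= b)%N ->
  exists2 f, stab_aut K j f & {in ys, forall y, supported (j + size ys) (f y)}.
Proof.
elim: ys => [|y ys IHys] Kys /= le_a le_b.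
  by exists id => //; apply: stab_aut_id.
have [|||f f_aut sf] := IHys; [by move=> y' y'in; apply/Kys/mem_behead | lia | lia |].
have [_ _ _ f_stab] := f_aut.
have [g g_aut sgfy] := stab_aut_lower (ltac:(lia) : (j + size ys < a)%N)
  (ltac:(lia) : (j + size ys < b)%N) (f_stab _ (Kys y (mem_head _ _))).
exists (g \o f); first by apply: stab_aut_comp => //; apply: stab_autW g_aut; lia.
move=> y'; rewrite inE addnS => /predU1P[-> // | y'in] /=.
have [_ _ g_fix _] := g_aut.
by rewrite g_fix; [apply: supported_leq (sf _ y'in) | exact: sf].
Qed.

Section Transport.
Variables a1 b1 a2 b2 k : nat.
Hypotheses (le_ka2 : (k <= a2)%N) (le_kb2 : (k <= b2)%N).
Implicit Types (d g : zvec a1 b1 -> zvec a1 b1) (y : zvec a2 b2).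

(* Conjugate of [d] through the identification of the [k]-supported parts of
   both spaces, extended by the identity on the remaining coordinates. *)
Definition transport d y : zvec a2 b2 :=
  trunc k (d (trunc k y)) + (y - trunc k (trunc k y : zvec a1 b1)).

Lemma transport_morph d : {morph d : x x' / x + x'} -> {morph transport d : y y' / y + y'}.
Proof.
move=> dD y y'; rewrite /transport !raddfD /= dD raddfD /=.
by rewrite [RHS]addrACA [(y - _) + _]addrACA.
Qed.

Lemma transport_trunc d x : supported k x -> transport d (trunc k x) = trunc k (d x).
Proof. by move=> sx; rewrite /transport truncK // subrr addr0. Qed.

Lemma transportK d g : (forall x, supported k x -> supported k (d x)) ->
  (forall x, supported k x -> g (d x) = x) -> cancel (transport d) (transport g).
Proof.
move=> d_stab dK y; set u : zvec a1 b1 := trunc k y.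
have su : supported k u by apply: supported_trunc.
have trunc_d : trunc k (transport d y) = d u :> zvec a1 b1.
  have sdu := d_stab u su.
  by rewrite /transport raddfD raddfB /= -/u !truncK // subrr addr0.
rewrite {1}/transport trunc_d dK // /transport -/u.
by rewrite [trunc k (d u) + _]addrC addrK addrC subrK.
Qed.

End Transport.

Section ExtendsToIso.
Variables (gT hT : finGroupType) (m : nat).
Local Open Scope group_scope.
Implicit Types c : config gT hT m.

Lemma mem_pebbled c p : p \in pebbled c -> exists i, c i = Some p.
Proof. by rewrite /pebbled mem_pmap => /mapP[i _ ->]; exists i. Qed.

Lemma extends_to_iso_morph c (F : gT -> hT) (S : {group gT}) :
  {morph F : x y / x * y} -> {in S &, injective F} ->
  (forall p, p \in pebbled c -> p.1 \in S /\ F p.1 = p.2) -> extends_to_iso c.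
Proof.
move=> FM F_inj Fc; set gs := [set p.1 | p in pebbled c].
have gsS : <<gs>> \subset S.
  by rewrite gen_subG; apply/subsetP => _ /imsetP[p /Fc[Sp _] ->].
have FM' : {in <<gs>> &, {morph F : x y / x * y}} by move=> x y _ _; apply: FM.
exists (Morphism FM'); split; last by move=> p /Fc[].
apply/isomP; split; first by apply/injmP; apply: sub_in2 F_inj; apply/subsetP.
rewrite morphim_gen ?subset_gen //= morphimEsub ?subset_gen // -imset_comp.
by congr <<_>>; apply: eq_in_imset => p /Fc[].
Qed.

End ExtendsToIso.

Lemma Z2Z4_mulE a b (x y : Z2Z4 a b) : (x * y)%g = (x : zvec a b) + y.
Proof. by []. Qed.

Lemma Z2Z4_oneE a b : (1%g : Z2Z4 a b) = 0 :> zvec a b.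
Proof. by []. Qed.

Section Invariant.
Variables a1 b1 a2 b2 m : nat.
Hypotheses (le_ma1 : (m <= a1)%N) (le_mb1 : (m <= b1)%N).
Hypotheses (le_ma2 : (m <= a2)%N) (le_mb2 : (m <= b2)%N).
Local Notation G := (Z2Z4 a1 b1).
Local Notation H := (Z2Z4 a2 b2).
Implicit Types c : config G H m.

Definition invariant_at k c :=
  exists (al : zvec a1 b1 -> zvec a1 b1) (be : zvec a2 b2 -> zvec a2 b2),
  [/\ {morph al : x y / x + y}, injective al, {morph be : x y / x + y}, injective be
    & forall i p, c i = Some p -> supported k (al p.1) /\ be p.2 = trunc m (al p.1)].

Lemma invariant_iso c : invariant_at m c -> extends_to_iso c.
Proof.
case=> al [be [alD al_inj beD be_inj c_inv]].
have [bi beK biK] := injF_bij be_inj.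
have biD : {morph bi : x y / x + y} by move=> x y; apply: be_inj; rewrite beD !biK.
pose F (x : G) : H := bi (trunc m (al x)).
have FM : {morph F : x y / (x * y)%g}.
  by move=> x y; rewrite /F !Z2Z4_mulE -biD -raddfD -alD.
pose S := [set x : G | al x \in supp_set m].
have memS x : (x \in S) = (al x \in supp_set m) by rewrite inE.
have S_group : group_set S.
  apply/group_setP; split.
    by rewrite memS Z2Z4_oneE (morphD0 alD); apply/supp_setP/supported0.
  move=> x y; rewrite !memS => /supp_setP sx /supp_setP sy.
  by apply/supp_setP; rewrite Z2Z4_mulE alD; apply: supportedD.
apply: (@extends_to_iso_morph _ _ _ _ F (Group S_group)) => //.
  move=> x y; rewrite !memS => /supp_setP sx /supp_setP sy /(congr1 be).
  by rewrite !biK => /(congr1 (@trunc a2 b2 a1 b1 m)); rewrite !truncK // => /al_inj.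
move=> p /mem_pebbled[i /c_inv[sp bp]]; rewrite memS; split; first exact/supp_setP.
by rewrite /F -bp beK.
Qed.

Lemma invariant_pick_up k (D : {set 'I_m}) c :
  invariant_at k c -> invariant_at k (pick_up D c).
Proof.
case=> al [be [alD al_inj beD be_inj c_inv]]; exists al, be; split=> // i p.
by rewrite /pick_up; case: ifP => // _; apply: c_inv.
Qed.

Lemma invariant_compress (I : {set 'I_m}) c : (forall i, i \notin I -> c i = None) ->
  invariant_at m c -> invariant_at #|I| c.
Proof.
move=> c_off [al [be [alD al_inj beD be_inj c_inv]]].
pose v i : zvec a1 b1 := if c i is Some p then al p.1 else 0.
have Kv : {in [seq v i | i <- enum I], forall y, supported m y}.
  move=> _ /mapP[i _ ->]; rewrite /v.
  by case ci : (c i) => [p|]; [apply: (c_inv i p ci).1 | apply: supported0].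
have size_vI : size [seq v i | i <- enum I] = #|I| by rewrite size_map cardE.
have le_Im : (#|I| <= m)%N by have := max_card I; rewrite card_ord.
have [||d d_aut sd] := compress_seq (j := 0) Kv; rewrite ?size_vI; try lia.
have [dD d_inj _ d_stab] := d_aut.
have [g [_ dK _]] := stab_aut_inv d_aut.
exists (d \o al), (transport m d \o be); split.
- by move=> x y /=; rewrite alD dD.
- exact: inj_comp.
- by move=> x y /=; rewrite beD (transport_morph _ dD).
- apply: inj_comp => //.
  exact: can_inj (transportK le_ma2 le_mb2 d_stab (fun x _ => dK x)).
move=> i p ci; have [sp bp] := c_inv i p ci.
have vi : al p.1 = v i by rewrite /v ci.
split; last by rewrite /= bp transport_trunc.
rewrite /= vi -size_vI; apply/sd/map_f.
by rewrite mem_enum; apply: contraT => /c_off; rewrite ci.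
Qed.

Lemma invariant_extend k (D : {set 'I_m}) c (am : 'I_m -> G) : (k + #|D| <= m)%N ->
  invariant_at k (pick_up D c) -> exists bm, invariant_at m (place D am bm c).
Proof.
move=> le_km [al [be [alD al_inj beD be_inj c_inv]]].
have size_amD : size [seq al (am i) | i <- enum D] = #|D| by rewrite size_map cardE.
have [||g g_aut sg] := @compress_seq _ _ (maxn a1 b1) k [seq al (am i) | i <- enum D]
  (fun y _ => supported_max y); rewrite ?size_amD; try lia.
have [gD g_inj g_fix _] := g_aut.
have [bi beK biK] := injF_bij be_inj.
exists (fun i => bi (trunc m (g (al (am i))))), (g \o al), be; split=> //.
- by move=> x y /=; rewrite alD gD.
- exact: inj_comp.
move=> i p; rewrite /place; case: ifP => [iD [<-] | iD ci] /=.
  rewrite biK; split=> //; apply: supported_leq (sg _ _); first by rewrite size_amD.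
  by apply: map_f; rewrite mem_enum.
have := c_inv i p; rewrite /pick_up iD => /(_ ci)[sp bp].
by rewrite g_fix //; split=> //; apply: supported_leq sp; lia.
Qed.

Lemma invariant_step (D : {set 'I_m}) c (am : 'I_m -> G) : invariant_at m c ->
  exists bm, invariant_at m (place D am bm c).
Proof.
move=> inv_c; apply: (@invariant_extend #|~: D|); first by rewrite addnC cardsC card_ord.
apply: invariant_compress; first by move=> i; rewrite inE negbK /pick_up => ->.
exact: invariant_pick_up.
Qed.

End Invariant.

Definition swap_config a1 b1 a2 b2 m (c : config (Z2Z4 a1 b1) (Z2Z4 a2 b2) m) :
  config (Z2Z4 a2 b2) (Z2Z4 a1 b1) m :=
  fun i => omap (fun p => (p.2, p.1)) (c i).

Lemma eq_invariant_at a1 b1 a2 b2 m k (c c' : config (Z2Z4 a1 b1) (Z2Z4 a2 b2) m) :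
  c =1 c' -> invariant_at k c -> invariant_at k c'.
Proof.
move=> eq_c [al [be [alD al_inj beD be_inj c_inv]]].
by exists al, be; split=> // i p; rewrite -eq_c; apply: c_inv.
Qed.

Lemma invariant_swap a1 b1 a2 b2 m (c : config (Z2Z4 a1 b1) (Z2Z4 a2 b2) m) :
  (m <= a2)%N -> (m <= b2)%N -> invariant_at m c -> invariant_at m (swap_config c).
Proof.
move=> le_ma2 le_mb2 [al [be [alD al_inj beD be_inj c_inv]]].
exists be, al; split=> // i p'; rewrite /swap_config.
case ci : (c i) => [p|] //= [<-] /=; have [sp ->] := c_inv i p ci.
by rewrite truncK //; split=> //; apply: supported_trunc.
Qed.

Lemma invariant_step_swap a1 b1 a2 b2 m (D : {set 'I_m})
    (c : config (Z2Z4 a1 b1) (Z2Z4 a2 b2) m) (bm : 'I_m -> Z2Z4 a2 b2) :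
  (m <= a1)%N -> (m <= b1)%N -> (m <= a2)%N -> (m <= b2)%N ->
  invariant_at m c -> exists am, invariant_at m (place D am bm c).
Proof.
move=> le_ma1 le_mb1 le_ma2 le_mb2 /(invariant_swap le_ma2 le_mb2) inv_c.
have [am inv_am] := invariant_step le_ma2 le_mb2 le_ma1 le_mb1 D bm inv_c.
exists am; apply: eq_invariant_at (invariant_swap le_ma1 le_mb1 inv_am) => i.
by rewrite /swap_config /place; case: ifP => // _; case: (c i) => [[]|].
Qed.

Lemma dup_survives_invariant a1 b1 a2 b2 m q :
  (m <= a1)%N -> (m <= b1)%N -> (m <= a2)%N -> (m <= b2)%N ->
  forall c : config (Z2Z4 a1 b1) (Z2Z4 a2 b2) m, invariant_at m c -> dup_survives q c.
Proof.
move=> le_ma1 le_mb1 le_ma2 le_mb2; cofix dup_survives_invariant => c inv_c.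
constructor=> D _; split; [|split].
- exact/(invariant_iso le_ma2 le_mb2)/invariant_pick_up.
- move=> am; case: (invariant_step le_ma1 le_mb1 le_ma2 le_mb2 D am inv_c) => bm inv_b.
  by exists bm; apply: dup_survives_invariant.
- move=> bm; case: (invariant_step_swap D bm le_ma1 le_mb1 le_ma2 le_mb2 inv_c) => am inv_a.
  by exists am; apply: dup_survives_invariant.
Qed.

Lemma card_Z2Z4 a b : #|[set: Z2Z4 a b]| = (2 ^ (a + 2 * b))%N.
Proof. by rewrite cardsT card_prod !card_mx !card_ord !mul1n expnD expnM. Qed.

Theorem dup_wins_Z2Z4 a1 b1 a2 b2 m q :
  (m <= a1)%N -> (m <= b1)%N -> (m <= a2)%N -> (m <= b2)%N ->
  (a1 + 2 * b1 = a2 + 2 * b2)%N -> dup_wins_game (Z2Z4 a1 b1) (Z2Z4 a2 b2) m q.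
Proof.
move=> le_ma1 le_mb1 le_ma2 le_mb2 eq_order; split; first by rewrite !card_Z2Z4 eq_order.
by apply: dup_survives_invariant => //; exists id, id; split.
Qed.

Local Close Scope ring_scope.

Theorem theorem1p3 (q n : nat) (hq : 1 <= q) (hn : 5 <= n) :
  dup_wins_game (Gn q n) (Hn q n) (q * n %/ 4) q.
Proof. by apply: dup_wins_Z2Z4; nia. Qed.
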